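(* Let $n\ge 2$ and let $b\in B_n$ be a half-twist with $\pi(b)=(1,n)$. Then $b^2\in A_n$, and there exists $P\in A_n$ such that $b^2=P^{-1}a_{n-1}P$.
   Context: $B_n$ is Artin's braid group with generators $\sigma_1,\dots,\sigma_{n-1}$; $\pi:B_n\to S_n$ is the homomorphism with $\pi(\sigma_i)=(i,i+1)$. A half-twist is an element of the conjugacy class of $\sigma_1$ in $B_n$. For $1\le i\le n-1$ let $a_i=\sigma_1\cdots\sigma_{i-1}\sigma_i^2\sigma_{i-1}^{-1}\cdots\sigma_1^{-1}$, and let $A_n$ be the subgroup of $B_n$ generated by $a_1,\dots,a_{n-1}$ (the ''combed braids'': braids representable with strings $2,\dots,n$ straight and parallel and only string 1 moving among them); $A_n$ is a free group on $a_1,\dots,a_{n-1}$. *)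

(* Artin braid group B_n given by its standard
   presentation: elements are words in sigma_i^{+-1} (1 <= i <= n-1) modulo the
   congruence generated by free cancellation and the braid relations. *)
From mathcomp Require Import all_boot.
Set Implicit Arguments. Unset Strict Implicit. Unset Printing Implicit Defensive.

(* a letter (i, true) = sigma_i, (i, false) = sigma_i^{-1} *)
Definition letter := (nat * bool)%type.
Definition word := seq letter.

Definition well_formed (n : nat) (w : word) : Prop :=
  all (fun l : letter => (1 <= l.1) && (l.1 <= n.-1)) w.

Definition winv (w : word) : word := rev (map (fun l : letter => (l.1, ~~ l.2)) w).

Inductive braid_rel (n : nat) : word -> word -> Prop :=
| rel_cancel : forall i (s : bool), 1 <= i -> i <= n.-1 ->
    braid_rel n [:: (i, s); (i, ~~ s)] [::]
| rel_braid : forall i, 1 <= i -> i.+1 <= n.-1 ->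
    braid_rel n [:: (i, true); (i.+1, true); (i, true)]
                [:: (i.+1, true); (i, true); (i.+1, true)]
| rel_comm : forall i j, 1 <= i -> i <= n.-1 -> 1 <= j -> j <= n.-1 -> i.+1 < j ->
    braid_rel n [:: (i, true); (j, true)] [:: (j, true); (i, true)].

Inductive braid_eq (n : nat) : word -> word -> Prop :=
| beq_refl : forall w, braid_eq n w w
| beq_sym : forall u v, braid_eq n u v -> braid_eq n v u
| beq_trans : forall u v w, braid_eq n u v -> braid_eq n v w -> braid_eq n u w
| beq_rel : forall u v x y, braid_rel n x y -> braid_eq n (u ++ x ++ v) (u ++ y ++ v).

Definition is_half_twist (n : nat) (b : word) : Prop :=
  exists g : word, well_formed n g /\ braid_eq n b (winv g ++ [:: (1, true)] ++ g).

Definition transp (a c : nat) (k : nat) : nat :=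
  if k == a then c else if k == c then a else k.

Definition perm_of_word (w : word) : nat -> nat :=
  foldr (fun (l : letter) f => transp l.1 l.1.+1 \o f) id w.

Definition a_word (i : nat) : word :=
  let pre := [seq (k, true) | k <- iota 1 i.-1] in
  pre ++ [:: (i, true); (i, true)] ++ winv pre.

(* words in the a_i^{+-1}, expanded into sigma-words *)
Definition a_letter (l : letter) : word :=
  if l.2 then a_word l.1 else winv (a_word l.1).
Definition expandA (s : word) : word := flatten (map a_letter s).

Definition in_A (n : nat) (w : word) : Prop :=
  exists s : word, well_formed n s /\ braid_eq n w (expandA s).

From mathcomp Require Import all_boot zify.
From Stdlib Require Import Setoid Morphisms.
Set Implicit Arguments. Unset Strict Implicit. Unset Printing Implicit Defensive.

(* Write [b = g^-1 sigma_1 g], so that [b^2 = g^-1 a_1 g].  Reading [g] letter by letter, the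
   partial conjugates of [a_1] stay in the normal form [stair k^-1 (w^-1 a_(q-1) w) stair k],
   where [stair k = sigma_1 ... sigma_(k-1)] and [w] is a word in the [a_i].  A letter
   [sigma_j^+-1] either slides through [stair k] as a letter [sigma_j'^+-1] with [j' >= 2], which
   acts on the free group [A_n] by Artin's automorphisms and so keeps the middle factor an
   [A_n]-conjugate of a generator, or it moves the stair by one step, contributing at most a
   factor [a_j^+-1] to [w].  The permutation of [g] tracks [k] and [q]: since [pi(b) = (1, n)],
   after replacing [g] by [sigma_1 g] if necessary the process ends with [k = 1] and [q = n]. *)

Arguments a_word : simpl never.

Ltac transp_lia := rewrite /transp; repeat case: ifP; move=> *; lia.

#[export] Instance braid_eq_Equivalence n : Equivalence (braid_eq n).
Proof. split; [exact: beq_refl | exact: beq_sym | exact: beq_trans]. Qed.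

Lemma braid_eq_catl n u v w : braid_eq n u v -> braid_eq n (u ++ w) (v ++ w).
Proof.
elim=> [x | ? ? _ -> | ? ? ? _ -> _ -> | u0 v0 x y r]; try reflexivity.
by rewrite -!catA; apply: beq_rel.
Qed.

Lemma braid_eq_catr n u v w : braid_eq n u v -> braid_eq n (w ++ u) (w ++ v).
Proof.
elim=> [x | ? ? _ -> | ? ? ? _ -> _ -> | u0 v0 x y r]; try reflexivity.
by rewrite !catA -!(catA (w ++ u0)); apply: beq_rel.
Qed.

#[export] Instance cat_Proper n :
  Proper (braid_eq n ==> braid_eq n ==> braid_eq n) (@cat letter).
Proof. move=> u v uv x y xy; exact: beq_trans (braid_eq_catl x uv) (braid_eq_catr v xy). Qed.

#[export] Instance cons_Proper n : Proper (eq ==> braid_eq n ==> braid_eq n) (@cons letter).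
Proof. by move=> a _ <- x y /(braid_eq_catr [:: a]). Qed.

Lemma winv_cat u v : winv (u ++ v) = winv v ++ winv u.
Proof. by rewrite /winv map_cat rev_cat. Qed.

Lemma winvK : involutive winv.
Proof. by move=> u; rewrite /winv map_rev -map_comp revK; elim: u => //= -[i s] u ->; rewrite negbK. Qed.

Lemma winv_cons x u : winv (x :: u) = winv u ++ [:: (x.1, ~~ x.2)].
Proof. by rewrite -cat1s winv_cat. Qed.

Definition wf_letter (n : nat) (l : letter) : bool := 1 <= l.1 <= n.-1.
Definition wf_word (n : nat) (w : word) : bool := all (wf_letter n) w.

Definition wconj (g x : word) : word := winv g ++ x ++ g.

Lemma wconj_cat g h x : wconj (g ++ h) x = wconj h (wconj g x).
Proof. by rewrite /wconj winv_cat -!catA. Qed.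

Section BraidWords.

Variable n : nat.

Lemma wf_word_cat u v : wf_word n (u ++ v) = wf_word n u && wf_word n v.
Proof. exact: all_cat. Qed.

Lemma wf_word_winv u : wf_word n (winv u) = wf_word n u.
Proof. by rewrite /wf_word /winv all_rev all_map. Qed.

Lemma cancel_letter i s v : 1 <= i <= n.-1 -> braid_eq n [:: (i, s), (i, ~~ s) & v] v.
Proof. by case/andP=> i1 i2; apply: (@beq_rel n [::] v _ [::] (rel_cancel s i1 i2)). Qed.

Lemma catKVw w v : wf_word n w -> braid_eq n (w ++ winv w ++ v) v.
Proof.
elim: w v => [|[i s] w IH] v /=; first reflexivity.
by case/andP=> wi ww; rewrite winv_cons -catA IH //; apply: cancel_letter.
Qed.

Lemma catKw w v : wf_word n w -> braid_eq n (winv w ++ w ++ v) v.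
Proof. by rewrite -wf_word_winv => /catKVw; rewrite winvK. Qed.

Lemma catwV w : wf_word n w -> braid_eq n (w ++ winv w) [::].
Proof. by move/(catKVw [::]); rewrite cats0. Qed.

Lemma catVw w : wf_word n w -> braid_eq n (winv w ++ w) [::].
Proof. by move/(catKw [::]); rewrite cats0. Qed.

Lemma braid_eq_winv u v : wf_word n u -> wf_word n v ->
  braid_eq n u v -> braid_eq n (winv u) (winv v).
Proof.
move=> wu wv uv.
transitivity (winv v ++ v ++ winv u); first by rewrite catKw //; reflexivity.
transitivity (winv v ++ u ++ winv u); first exact/braid_eq_catr/braid_eq_catl/beq_sym.
by rewrite catwV // cats0; reflexivity.
Qed.

Lemma wconj_braid_eq g h x : wf_word n g -> wf_word n h ->
  braid_eq n g h -> braid_eq n (wconj g x) (wconj h x).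
Proof. by move=> wg wh gh; rewrite /wconj (braid_eq_winv wg wh gh) gh; reflexivity. Qed.

Lemma wconjK g x : wf_word n g -> braid_eq n (wconj g (g ++ x ++ winv g)) x.
Proof. by move=> wg; rewrite /wconj -!catA catKw // catVw // cats0; reflexivity. Qed.

Lemma wconjM g x y : wf_word n g ->
  braid_eq n (wconj g x ++ wconj g y) (wconj g (x ++ y)).
Proof. by move=> wg; rewrite /wconj -!catA catKVw //; reflexivity. Qed.

(* [braid_conj y u v] encodes [y^-1 u y = v] without inverting [y]. *)
Definition braid_conj (y u v : word) : Prop := braid_eq n (u ++ y) (y ++ v).

Lemma braid_conj_empty y : braid_conj y [::] [::].
Proof. by rewrite /braid_conj cats0; reflexivity. Qed.

Lemma braid_conj_by_nil x : braid_conj [::] x x.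
Proof. by rewrite /braid_conj cats0; reflexivity. Qed.

Lemma braid_conj_comm x y : braid_conj y x x -> braid_conj x y y.
Proof. exact: beq_sym. Qed.

Lemma braid_conj_cat y u v u' v' :
  braid_conj y u v -> braid_conj y u' v' -> braid_conj y (u ++ u') (v ++ v').
Proof. by rewrite /braid_conj => h h'; rewrite -catA h' catA h -catA; reflexivity. Qed.

Lemma braid_conj_eq y u v u' v' : braid_eq n u u' -> braid_eq n v v' ->
  braid_conj y u v -> braid_conj y u' v'.
Proof. by rewrite /braid_conj => -> ->. Qed.

Lemma braid_conj_shift y u v w :
  braid_conj y u v -> braid_eq n (u ++ y ++ w) (y ++ v ++ w).
Proof. by move/(braid_eq_catl w); rewrite -!catA. Qed.

Lemma braid_conjE y u v : wf_word n y -> braid_conj y u v -> braid_eq n (wconj y u) v.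
Proof. by rewrite /braid_conj /wconj => wy ->; rewrite catA catVw //; reflexivity. Qed.

Lemma braid_conj_winv y u v : wf_word n u -> wf_word n v ->
  braid_conj y u v -> braid_conj y (winv u) (winv v).
Proof.
move=> wu wv h; rewrite /braid_conj.
transitivity (winv u ++ (y ++ v) ++ winv v); first by rewrite -catA catwV // cats0; reflexivity.
by rewrite -h -catA catA catVw //; reflexivity.
Qed.

Lemma braid_conj_sym y u v : wf_word n y -> braid_conj y u v -> braid_conj (winv y) v u.
Proof.
move=> wy h; rewrite /braid_conj.
symmetry; transitivity (winv y ++ (u ++ y) ++ winv y).
  by rewrite -catA catwV // cats0; reflexivity.
by rewrite h !catA catVw //; reflexivity.
Qed.

Lemma braid3 i v : 1 <= i -> i.+1 <= n.-1 ->
  braid_eq n [:: (i, true), (i.+1, true), (i, true) & v]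
             [:: (i.+1, true), (i, true), (i.+1, true) & v].
Proof. by move=> i1 i2; apply: (@beq_rel n [::] v _ _ (rel_braid i1 i2)). Qed.

Lemma far_comm_letter i j s t : 1 <= i <= n.-1 -> 1 <= j <= n.-1 ->
  (i.+1 < j) || (j.+1 < i) -> braid_conj [:: (j, t)] [:: (i, s)] [:: (i, s)].
Proof.
move=> /andP[i1 i2] /andP[j1 j2] far.
have wi : wf_word n [:: (i, true)] by rewrite /wf_word /= /wf_letter /= i1 i2.
have wj : wf_word n [:: (j, true)] by rewrite /wf_word /= /wf_letter /= j1 j2.
have pos : braid_conj [:: (j, true)] [:: (i, true)] [:: (i, true)].
  case/orP: far => lt; rewrite /braid_conj.
    exact: (@beq_rel n [::] [::] _ _ (rel_comm i1 i2 j1 j2 lt)).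
  symmetry; exact: (@beq_rel n [::] [::] _ _ (rel_comm j1 j2 i1 i2 lt)).
have {}pos : braid_conj [:: (j, true)] [:: (i, s)] [:: (i, s)].
  by case: s; last exact: (braid_conj_winv wi wi pos).
by case: t; last exact: (braid_conj_sym wj pos).
Qed.

Lemma far_comm_word j s w : 1 <= j <= n.-1 ->
  all (fun l : letter => (1 <= l.1 <= n.-1) && ((l.1.+1 < j) || (j.+1 < l.1))) w ->
  braid_conj [:: (j, s)] w w.
Proof.
move=> wj; elim: w => [|[i t] w IH] /=; first by move=> _; apply: braid_conj_empty.
by case/andP=> /andP[wi far] /IH; apply: braid_conj_cat (far_comm_letter t s wi wj far).
Qed.

(* The permutation of [stair k] sends [k] to [1] and [i < k] to [i + 1]. *)
Definition stair (k : nat) : word := [seq (i, true) | i <- iota 1 k.-1].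

Lemma stairS k : 1 <= k -> stair k.+1 = stair k ++ [:: (k, true)].
Proof.
by case: k => // k _; rewrite /stair succnK -[k.+1]addn1 iotaD map_cat add1n addn1.
Qed.

Lemma a_wordE i : a_word i = stair i ++ [:: (i, true); (i, true)] ++ winv (stair i).
Proof. by []. Qed.

Lemma wf_stair k : k <= n -> wf_word n (stair k).
Proof.
move=> kn; rewrite /wf_word /stair all_map; apply/allP => i.
by rewrite mem_iota /wf_letter /= => /andP[i1 i2]; apply/andP; split; lia.
Qed.

Lemma braid_conj_stair_far j s k : k < j -> j <= n.-1 ->
  braid_conj [:: (j, s)] (stair k) (stair k).
Proof.
move=> kj jn; apply: far_comm_word; first by apply/andP; split; lia.
rewrite /stair all_map; apply/allP => i /=; rewrite mem_iota => /andP[i1 i2].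
by apply/andP; split; [apply/andP; split|]; lia.
Qed.

Lemma braid_conj_stair_shift j e k : 1 <= j -> j.+1 < k -> k <= n ->
  braid_conj (stair k) [:: (j.+1, e)] [:: (j, e)].
Proof.
move=> j1 jk kn.
suff pos : braid_conj (stair k) [:: (j.+1, true)] [:: (j, true)].
  case: e => //; apply: braid_conj_winv pos; rewrite /wf_word /= /wf_letter /= andbT; lia.
elim: k jk kn => // k IH jk kn.
have [-> | jk'] : k = j.+1 \/ j.+1 < k by lia.
- rewrite /braid_conj !stairS // -!catA.
  rewrite -(braid_conj_shift _ (braid_conj_stair_far true (ltnSn j) _)); last lia.
  by apply/braid_eq_catr/beq_sym; apply: braid3 => //; lia.
rewrite /braid_conj stairS; last lia.
rewrite catA IH; try lia; rewrite -!catA.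
by apply/braid_eq_catr/far_comm_letter; lia.
Qed.

Lemma braid_conj_sandwich g y y' x x' : wf_word n g ->
  braid_conj g y y' -> braid_conj y' x x' -> braid_conj y (g ++ x ++ winv g) (g ++ x' ++ winv g).
Proof.
move=> wg gy y'x; rewrite /braid_conj -!catA -(braid_conj_sym wg gy).
by rewrite (braid_conj_shift _ y'x) !catA -gy; reflexivity.
Qed.

Lemma wf_a_word i : 1 <= i <= n.-1 -> wf_word n (a_word i).
Proof.
move=> /andP[i1 i2]; rewrite a_wordE !wf_word_cat wf_word_winv wf_stair; last lia.
by rewrite /wf_word /= /wf_letter /= i1 i2.
Qed.

Lemma a_word_support i : 1 <= i -> all (fun l : letter => 1 <= l.1 <= i) (a_word i).
Proof.
move=> i1; rewrite a_wordE !all_cat /winv all_rev !all_map /= i1 leqnn /= andbb.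
by apply/allP => k; rewrite mem_iota /=; lia.
Qed.

Definition wsubst (f : letter -> word) (s : word) : word := flatten (map f s).

Lemma wsubst_cat f s t : wsubst f (s ++ t) = wsubst f s ++ wsubst f t.
Proof. by rewrite /wsubst map_cat flatten_cat. Qed.

Lemma wsubst_winv f : (forall l, f (l.1, ~~ l.2) = winv (f l)) ->
  forall s, wsubst f (winv s) = winv (wsubst f s).
Proof.
move=> fV; elim=> [|l s IH] //=; rewrite winv_cons wsubst_cat IH /wsubst /= cats0.
by rewrite fV winv_cat.
Qed.

Lemma wf_wsubst f s : (forall l, wf_letter n l -> wf_word n (f l)) ->
  wf_word n s -> wf_word n (wsubst f s).
Proof.
move=> wf; elim: s => [|l s IH] //= /andP[wl ws].
by rewrite /wsubst /= wf_word_cat (wf l wl) IH.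
Qed.

Lemma expandA_cat s t : expandA (s ++ t) = expandA s ++ expandA t.
Proof. exact: wsubst_cat. Qed.

Lemma expandA_winv s : expandA (winv s) = winv (expandA s).
Proof. by apply: wsubst_winv => -[i []]; rewrite /a_letter /= ?winvK. Qed.

Lemma wf_expandA s : wf_word n s -> wf_word n (expandA s).
Proof. by apply: wf_wsubst => -[i []] wi; rewrite /a_letter /= ?wf_word_winv wf_a_word. Qed.

(* [artin_pair j e i = (c, i')] records that [sigma_j^-e a_i sigma_j^e = c^-1 a_i' c],
   with [c] a word in the letters [a_k] (Artin's action of [B_n] on the free group [A_n]). *)
Definition artin_pair (j : nat) (e : bool) (i : nat) : word * nat :=
  if e then
    if i == j.-1 then ([::], j) else if i == j then ([:: (j, false)], j.-1) else ([::], i)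
  else
    if i == j then ([::], j.-1) else if i == j.-1 then ([:: (j.-1, true)], j) else ([::], i).

Definition artin_gen (j : nat) (e : bool) (i : nat) : word :=
  wconj (artin_pair j e i).1 [:: ((artin_pair j e i).2, true)].

Definition artin_letter (j : nat) (e : bool) (l : letter) : word :=
  if l.2 then artin_gen j e l.1 else winv (artin_gen j e l.1).

Definition artin_map (j : nat) (e : bool) : word -> word := wsubst (artin_letter j e).

Section ArtinRelations.

Variable p : nat.
Hypotheses (p1 : 1 <= p) (pn : p.+1 <= n.-1).

Let sigma := [:: (p.+1, true)].

Let braid_conj_stair x x' :
  braid_conj sigma x x' ->
  braid_conj sigma (stair p ++ x ++ winv (stair p)) (stair p ++ x' ++ winv (stair p)).
Proof.
by apply: braid_conj_sandwich; [apply: wf_stair | apply/braid_conj_comm/braid_conj_stair_far]; lia.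
Qed.

Lemma a_word_pred : braid_conj sigma (a_word p) (a_word p.+1).
Proof.
have -> : a_word p.+1 = stair p ++
    [:: (p, true); (p.+1, true); (p.+1, true); (p, false)] ++ winv (stair p).
  by rewrite a_wordE stairS // winv_cat -!catA.
apply: braid_conj_stair; rewrite /braid_conj /=.
rewrite -(braid3 _ p1 pn) -(braid3 _ p1 pn) cancel_letter //; last lia.
reflexivity.
Qed.

Lemma a_word_succ_pred :
  braid_conj sigma (a_word p.+1 ++ a_word p) (a_word p.+1 ++ a_word p).
Proof.
have wS : wf_word n (stair p) by apply: wf_stair; lia.
have E : braid_eq n
    (stair p ++ [:: (p, true); (p.+1, true); (p.+1, true); (p, true)] ++ winv (stair p))
    (a_word p.+1 ++ a_word p).
  rewrite !a_wordE stairS // winv_cat -!catA /= catKw //.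
  by rewrite cancel_letter //; [reflexivity | lia].
apply: (braid_conj_eq E E); apply: braid_conj_stair; rewrite /braid_conj /=.
rewrite -(braid3 _ p1 pn) (braid3 (_ :: _) p1 pn); reflexivity.
Qed.

Lemma a_word_succ :
  braid_conj sigma (a_word p.+1) (a_word p.+1 ++ a_word p ++ winv (a_word p.+1)).
Proof.
have wp : wf_word n (a_word p) by apply: wf_a_word; lia.
have wS : wf_word n (a_word p.+1) by apply: wf_a_word; lia.
have := braid_conj_cat a_word_succ_pred (braid_conj_winv wp wS a_word_pred).
by apply: braid_conj_eq; rewrite -catA ?catwV ?cats0 //; reflexivity.
Qed.

Lemma a_word_far i : 1 <= i <= n.-1 -> i != p -> i != p.+1 ->
  braid_conj sigma (a_word i) (a_word i).
Proof.
move=> /andP[i1 i2] ip ip1; have [ltip | ltpi] : i < p \/ p.+1 < i by lia.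
  apply: far_comm_word; first lia.
  by apply: sub_all (a_word_support i1) => l; lia.
apply: braid_conj_sandwich; first by apply: wf_stair; lia.
  by apply: braid_conj_stair_shift => //; lia.
by apply: far_comm_word; rewrite /= ?andbT; lia.
Qed.

Lemma braid_conj_a_word_artin e i : 1 <= i <= n.-1 ->
  braid_conj [:: (p.+1, e)] (a_word i) (expandA (artin_gen p.+1 e i)).
Proof.
move=> wi; have ws : wf_word n sigma by rewrite /wf_word /= /wf_letter /=; lia.
have wp : wf_word n (a_word p) by apply: wf_a_word; lia.
have wS : wf_word n (a_word p.+1) by apply: wf_a_word; lia.
rewrite /artin_gen /artin_pair /wconj /expandA; case: e.
  case: eqP => [-> | /eqP ip] /=; first by rewrite cats0; apply: a_word_pred.
  case: eqP => [-> | /eqP ip1] /=; first by rewrite cats0; apply: a_word_succ.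
  by rewrite cats0; apply: a_word_far.
apply: (braid_conj_sym ws).
case: eqP => [-> | /eqP ip1] /=; first by rewrite cats0; apply: a_word_pred.
case: eqP => [-> | /eqP ip] /=; last by rewrite cats0; apply: a_word_far.
rewrite cats0 /a_letter /=.
apply: braid_conj_eq (beq_refl _ _) (wconjK _ wS) _.
exact: braid_conj_cat (braid_conj_winv wp wS a_word_pred)
         (braid_conj_cat a_word_succ a_word_pred).
Qed.

End ArtinRelations.

Lemma wsubst1 f l : wsubst f [:: l] = f l.
Proof. exact: cats0. Qed.

Lemma wsubst_wconj f g x : (forall l, f (l.1, ~~ l.2) = winv (f l)) ->
  wsubst f (wconj g x) = wconj (wsubst f g) (wsubst f x).
Proof. by move=> fV; rewrite /wconj !wsubst_cat wsubst_winv. Qed.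

Lemma expandA1 l : expandA [:: l] = a_letter l.
Proof. exact: cats0. Qed.

Lemma a_letterV l : a_letter (l.1, ~~ l.2) = winv (a_letter l).
Proof. by case: l => i []; rewrite /a_letter /= ?winvK. Qed.

Lemma artin_letterV j e l : artin_letter j e (l.1, ~~ l.2) = winv (artin_letter j e l).
Proof. by case: l => i []; rewrite /artin_letter /= ?winvK. Qed.

Lemma expandA_wconj g x : expandA (wconj g x) = wconj (expandA g) (expandA x).
Proof. exact: wsubst_wconj a_letterV. Qed.

Lemma artin_pair_index j e i : 2 <= j -> 1 <= i -> (artin_pair j e i).2.+1 = transp j j.+1 i.+1.
Proof. by rewrite /artin_pair => j2 i1; case: e; repeat case: ifP; move=> /= *; transp_lia. Qed.

Lemma wf_artin_pair j e i : 2 <= j <= n.-1 -> wf_word n (artin_pair j e i).1.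
Proof.
by rewrite /artin_pair => j2; case: e; repeat case: ifP => _; rewrite /wf_word /= /wf_letter /=; lia.
Qed.

Lemma wf_artin_gen j e i : 2 <= j <= n.-1 -> 1 <= i <= n.-1 -> wf_word n (artin_gen j e i).
Proof.
rewrite /artin_gen /wconj !wf_word_cat wf_word_winv => wj wi; rewrite wf_artin_pair //=.
rewrite /wf_word /= /wf_letter /artin_pair.
by case: e; repeat case: ifP; move=> /= *; lia.
Qed.

Lemma wf_artin_map j e w : 2 <= j <= n.-1 -> wf_word n w -> wf_word n (artin_map j e w).
Proof.
by move=> wj; apply: wf_wsubst => -[i []] wi; rewrite /artin_letter /= ?wf_word_winv wf_artin_gen.
Qed.

Lemma braid_conj_expandA_artin j e w : 2 <= j <= n.-1 -> wf_word n w ->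
  braid_conj [:: (j, e)] (expandA w) (expandA (artin_map j e w)).
Proof.
case: j => // p /andP[p1 pn]; elim: w => [|[i s] w IH] /=; first by move=> _; apply: braid_conj_empty.
case/andP=> wi /IH {}IH; have {}wi : 1 <= i <= n.-1 := wi.
rewrite -[(i, s) :: w]cat1s /artin_map wsubst_cat expandA_cat; apply: braid_conj_cat IH.
rewrite wsubst1 /a_letter /artin_letter /=.
have conj_a := braid_conj_a_word_artin p1 pn e wi.
case: s => //; rewrite expandA_winv; apply: braid_conj_winv conj_a; first exact: wf_a_word.
by apply/wf_expandA/wf_artin_gen => //; lia.
Qed.

(* [w^-1 a_(q-1) w], written in the letters [a_i] (it is read through [expandA]). *)
Definition Atwist (w : word) (q : nat) : word := wconj w [:: (q.-1, true)].

Lemma wf_Atwist w q : 2 <= q <= n -> wf_word n w -> wf_word n (Atwist w q).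
Proof.
move=> wq ww; rewrite /Atwist /wconj !wf_word_cat wf_word_winv ww andbT.
by rewrite /wf_word /= /wf_letter /=; lia.
Qed.

Lemma braid_conj_wconj y x : wf_word n y -> braid_conj y x (wconj y x).
Proof. by rewrite /braid_conj /wconj => wy; rewrite catKVw //; reflexivity. Qed.

Lemma braid_conj_Atwist_rcons w q l : wf_letter n l ->
  braid_conj (expandA [:: l]) (expandA (Atwist w q)) (expandA (Atwist (rcons w l) q)).
Proof.
move=> wl; rewrite /Atwist -cats1 wconj_cat (expandA_wconj [:: l]).
by apply/braid_conj_wconj/wf_expandA; rewrite /wf_word /= wl.
Qed.

Lemma braid_conj_Atwist_artin j e w q : 2 <= j <= n.-1 -> 2 <= q <= n -> wf_word n w ->
  braid_conj [:: (j, e)] (expandA (Atwist w q))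
    (expandA (Atwist ((artin_pair j e q.-1).1 ++ artin_map j e w) (transp j j.+1 q))).
Proof.
move=> wj wq ww.
have index : (artin_pair j e q.-1).2 = (transp j j.+1 q).-1.
  by rewrite -[X in transp _ _ X]prednK -?(artin_pair_index e) //; lia.
have -> : Atwist ((artin_pair j e q.-1).1 ++ artin_map j e w) (transp j j.+1 q) =
          artin_map j e (Atwist w q).
  rewrite /artin_map /Atwist (wsubst_wconj _ _ (artin_letterV j e)) wconj_cat wsubst1.
  by rewrite /artin_letter /artin_gen index.
by apply: braid_conj_expandA_artin => //; apply: wf_Atwist.
Qed.

Lemma stair_sq j : j <= n ->
  braid_eq n (stair j ++ [:: (j, true); (j, true)]) (a_word j ++ stair j).
Proof. by move=> wj; rewrite a_wordE -!catA catVw ?cats0 ?wf_stair //; reflexivity. Qed.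

Lemma stair_sqV j : 1 <= j <= n.-1 ->
  braid_eq n (stair j ++ [:: (j, false)]) (winv (a_word j) ++ stair j.+1).
Proof.
move=> wj; rewrite a_wordE stairS ?winv_cat ?winvK -?catA; last lia.
rewrite catKw /=; last by apply: wf_stair; lia.
symmetry; apply/braid_eq_catr/(cons_Proper (erefl (j, false))).
exact: (cancel_letter false).
Qed.

(* [unstair k q] is the point sent to [q >= 2] by the permutation of [stair k]. *)
Definition unstair (k q : nat) : nat := if q <= k then q.-1 else q.

(* [twisted x k p]: [x] is the full twist of the strands at positions [k] and [p],
   in the normal form [stair k^-1 (w^-1 a_(q-1) w) stair k] with [w] in [A_n]. *)
Definition twisted (x : word) (k p : nat) : Prop :=
  exists q w, [/\ 1 <= k <= n, 2 <= q <= n, wf_word n w, unstair k q = p &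
    braid_eq n x (wconj (stair k) (expandA (Atwist w q)))].

Lemma twisted_braid_eq x x' k p : braid_eq n x x' -> twisted x' k p -> twisted x k p.
Proof. by move=> xx' [q [w [wk wq ww kq x'E]]]; exists q, w; split=> //; rewrite xx'. Qed.

Lemma twisted_step k q w j e k' q' w' y :
  1 <= k <= n -> 1 <= k' <= n -> 2 <= q' <= n -> wf_letter n (j, e) ->
  wf_word n y -> wf_word n w' ->
  braid_eq n (stair k ++ [:: (j, e)]) (y ++ stair k') ->
  braid_conj y (expandA (Atwist w q)) (expandA (Atwist w' q')) ->
  k' = transp j j.+1 k -> unstair k' q' = transp j j.+1 (unstair k q) ->
  twisted (wconj [:: (j, e)] (wconj (stair k) (expandA (Atwist w q))))
    (transp j j.+1 k) (transp j j.+1 (unstair k q)).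
Proof.
move=> wk wk' wq' wje wy ww' shift yX <- <-; exists q', w'; split=> //.
have wS : wf_word n (stair k ++ [:: (j, e)]) by rewrite wf_word_cat /= wje wf_stair //; lia.
have wS' : wf_word n (y ++ stair k') by rewrite wf_word_cat wy wf_stair //; lia.
rewrite -wconj_cat (wconj_braid_eq _ wS wS' shift) wconj_cat.
by rewrite [wconj (stair k') _]/wconj (braid_conjE wy yX); reflexivity.
Qed.

Section StairStep.

Variables (k q : nat) (w : word) (j : nat) (e : bool).
Hypotheses (wk : 1 <= k <= n) (wq : 2 <= q <= n) (ww : wf_word n w) (wj : 1 <= j <= n.-1).

Let X := expandA (Atwist w q).

Let stepped : Prop := twisted (wconj [:: (j, e)] (wconj (stair k) X))
  (transp j j.+1 k) (transp j j.+1 (unstair k q)).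

Lemma twisted_step_above : j.+1 < k -> stepped.
Proof.
move=> jk; apply: (twisted_step (k' := k) (q' := transp j.+1 j.+2 q) (y := [:: (j.+1, e)])
  (w' := (artin_pair j.+1 e q.-1).1 ++ artin_map j.+1 e w)) => //.
- by rewrite /unstair; transp_lia.
- by rewrite /wf_word /= /wf_letter /=; lia.
- by rewrite wf_word_cat wf_artin_pair ?wf_artin_map //; lia.
- by symmetry; apply: braid_conj_stair_shift; lia.
- by apply: braid_conj_Atwist_artin => //; lia.
- by rewrite /unstair; transp_lia.
- by rewrite /unstair; transp_lia.
Qed.

Lemma twisted_step_below : k < j -> stepped.
Proof.
move=> kj; apply: (twisted_step (k' := k) (q' := transp j j.+1 q) (y := [:: (j, e)])
  (w' := (artin_pair j e q.-1).1 ++ artin_map j e w)) => //.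
- by rewrite /unstair; transp_lia.
- by rewrite /wf_word /= /wf_letter /=; lia.
- by rewrite wf_word_cat wf_artin_pair ?wf_artin_map //; lia.
- by apply: braid_conj_stair_far; lia.
- by apply: braid_conj_Atwist_artin => //; lia.
- by rewrite /unstair; transp_lia.
- by rewrite /unstair; transp_lia.
Qed.

Lemma twisted_step_succ : k = j.+1 -> stepped.
Proof.
rewrite /stepped /X => kE; rewrite kE.
case: e.
- apply: (twisted_step (k' := j) (q' := q) (y := expandA [:: (j, true)])
    (w' := rcons w (j, true))) => //; try lia.
  + by apply: wf_expandA; rewrite /wf_word /= andbT.
  + by rewrite -cats1 wf_word_cat ww /wf_word /= andbT.
  + rewrite stairS; last lia.
    by rewrite -catA expandA1; apply: stair_sq; lia.
  + by apply: braid_conj_Atwist_rcons.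
  + by rewrite /unstair; transp_lia.
  + by rewrite /unstair; transp_lia.
- apply: (twisted_step (k' := j) (q' := q) (y := [::]) (w' := w)) => //; try lia.
  + by rewrite stairS -?catA /= ?cancel_letter ?cats0 //; [reflexivity | lia].
  + by apply: braid_conj_by_nil.
  + by rewrite /unstair; transp_lia.
  + by rewrite /unstair; transp_lia.
Qed.

Lemma twisted_step_same : k = j -> stepped.
Proof.
rewrite /stepped /X => kE; rewrite kE; case: e.
- apply: (twisted_step (k' := j.+1) (q' := q) (y := [::]) (w' := w)) => //; try lia.
  + by rewrite stairS //; [reflexivity | lia].
  + by apply: braid_conj_by_nil.
  + by rewrite /unstair; transp_lia.
  + by rewrite /unstair; transp_lia.
- apply: (twisted_step (k' := j.+1) (q' := q) (y := expandA [:: (j, false)])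
    (w' := rcons w (j, false))) => //; try lia.
  + by apply: wf_expandA; rewrite /wf_word /= andbT.
  + by rewrite -cats1 wf_word_cat ww /wf_word /= andbT.
  + by rewrite expandA1; apply: stair_sqV.
  + by apply: braid_conj_Atwist_rcons.
  + by rewrite /unstair; transp_lia.
  + by rewrite /unstair; transp_lia.
Qed.

End StairStep.

Lemma twisted_wconj_letter x k p j e : 1 <= j <= n.-1 ->
  twisted x k p -> twisted (wconj [:: (j, e)] x) (transp j j.+1 k) (transp j j.+1 p).
Proof.
move=> wj [q [w [wk wq ww <- xE]]].
apply: (@twisted_braid_eq _ (wconj [:: (j, e)] (wconj (stair k) (expandA (Atwist w q))))).
  by rewrite /wconj xE; reflexivity.
have [jk | [kj | [kE | kE]]] : j.+1 < k \/ k < j \/ k = j.+1 \/ k = j by lia.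
- exact: twisted_step_above.
- exact: twisted_step_below.
- exact: twisted_step_succ.
- exact: twisted_step_same.
Qed.

Lemma twisted_wconj_sigma1_sq g : 2 <= n -> wf_word n g ->
  twisted (wconj g [:: (1, true); (1, true)])
    (perm_of_word (winv g) 1) (perm_of_word (winv g) 2).
Proof.
move=> n2; elim/last_ind: g => [_ | g [j e] IH].
  by exists 2, [::]; split=> //=; [lia | exact: beq_refl].
rewrite -cats1 wf_word_cat => /andP[/IH twg]; rewrite /wf_word /= andbT => wj.
by rewrite wconj_cat winv_cat /=; apply: twisted_wconj_letter.
Qed.

End BraidWords.

Lemma perm_of_word_cat u v x : perm_of_word (u ++ v) x = perm_of_word u (perm_of_word v x).
Proof. by elim: u x => //= l u IH x; rewrite IH. Qed.

Lemma transpK a c : involutive (transp a c).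
Proof. by move=> k; transp_lia. Qed.

Lemma perm_of_winvK g : cancel (perm_of_word g) (perm_of_word (winv g)).
Proof. by elim: g => // l g IH x; rewrite winv_cons perm_of_word_cat /= transpK IH. Qed.

Lemma perm_of_winvKV g : cancel (perm_of_word (winv g)) (perm_of_word g).
Proof. by move=> x; rewrite -{1}[g]winvK perm_of_winvK. Qed.

Lemma perm_of_word_braid_rel n u v : braid_rel n u v -> perm_of_word u =1 perm_of_word v.
Proof. by case=> * k /=; transp_lia. Qed.

Lemma perm_of_word_braid_eq n u v : braid_eq n u v -> perm_of_word u =1 perm_of_word v.
Proof.
elim=> [w | ? ? _ IH | ? ? ? _ IH1 _ IH2 | ? ? ? ? /perm_of_word_braid_rel IH] k //.
- by rewrite IH1 IH2.
by rewrite !perm_of_word_cat IH.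
Qed.

Lemma half_twist_normalize n b g : 2 <= n -> wf_word n g ->
  braid_eq n b (wconj g [:: (1, true)]) -> (forall k, perm_of_word b k = transp 1 n k) ->
  exists h, [/\ wf_word n h, braid_eq n b (wconj h [:: (1, true)]),
    perm_of_word (winv h) 1 = 1 & perm_of_word (winv h) 2 = n].
Proof.
move=> n2 wg bg pb; set P := perm_of_word (winv g).
have PE x : transp 1 n (P x) = P (transp 1 2 x).
  by rewrite -pb (perm_of_word_braid_eq bg) /wconj !perm_of_word_cat perm_of_winvKV.
have P12 : P 1 <> P 2 by move/(congr1 (perm_of_word g)); rewrite !perm_of_winvKV.
have P2 : P 2 = transp 1 n (P 1) by rewrite PE.
have [P1 | P1] : P 1 = 1 \/ P 1 = n.
  by move: P12 P2; transp_lia.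
- by exists g; split=> //; rewrite -/P P2 P1 /transp eqxx.
exists ((1, true) :: g); split.
- by apply/andP; split=> //; rewrite /wf_letter /=; lia.
- by rewrite bg /wconj winv_cons -!catA /= cancel_letter //; [reflexivity | lia].
- by rewrite winv_cons perm_of_word_cat /= -/P P2 P1 /transp eqxx; case: ifP => //; lia.
by rewrite winv_cons perm_of_word_cat /= -/P P1.
Qed.

Theorem lemma3p5 (n : nat) (b : word) :
  2 <= n -> well_formed n b -> is_half_twist n b ->
  (forall k, perm_of_word b k = transp 1 n k) ->
  in_A n (b ++ b) /\
  exists P : word, well_formed n P /\
    braid_eq n (b ++ b) (winv (expandA P) ++ a_word n.-1 ++ expandA P).
Proof.
move=> n2 _ [g [wg bg]] pb.
have [h [wh bh h1 h2]] := half_twist_normalize n2 wg bg pb.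
have [q [w [_ wq ww qn bbE]]] := twisted_wconj_sigma1_sq n2 wh.
move: qn bbE; rewrite h1 h2 /unstair ifN; last lia.
move=> {q wq}-> bbE.
have bb : braid_eq n (b ++ b) (expandA (Atwist w n)).
  by rewrite bh wconjM // bbE /wconj cats0; reflexivity.
split; first by exists (Atwist w n); split=> //; apply: wf_Atwist => //; lia.
by exists w; split=> //; rewrite bb /Atwist expandA_wconj expandA1; reflexivity.
Qed.
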